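(* Let $H$ be a Hilbert space, $P_A,P_B$ orthogonal projections on $H$, and $R_0\in B(H)$ a positive operator. Define the sequence $(R_n)_{n\ge0}$ by $R_{n+1}=\Phi_{P_B}(R_n)$ for $n$ even and $R_{n+1}=\Phi_{P_A}(R_n)$ for $n$ odd, and let $K:=\ker P_A\cap\ker P_B$. Then $0\le R_{n+1}\le R_n\le R_0$ for all $n$ (Loewner order), and there is a unique positive operator $R_\infty\in B(H)$ with $R_n\to R_\infty$ in the strong operator topology. Moreover: (1) $0\le R_\infty\le R_0$; (2) $\operatorname{ran}(R_\infty)\subset K$; (3) $R_\infty=\Phi_{P_A}(R_\infty)=\Phi_{P_B}(R_\infty)$.
   Context: For an orthogonal projection $P$ on $H$ and a positive operator $R\in B(H)$, the weighted residual map is $\Phi_P(R):=R^{1/2}(I-P)R^{1/2}$, where $R^{1/2}$ is the positive square root. The Loewner order is $A\le B$ iff $B-A$ is positive. *)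

From Stdlib Require Import ClassicalEpsilon.
From mathcomp Require Import all_boot all_order all_algebra.
From mathcomp.real_closed Require Import complex.
From mathcomp Require Import reals.

Set Implicit Arguments.
Unset Strict Implicit.
Unset Printing Implicit Defensive.

Import Order.TTheory GRing.Theory Num.Theory.
Local Open Scope ring_scope.

Section Hilbert.
Variables (R : realType) (V : lmodType R[i]) (ip : V -> V -> R[i]).

Definition hnorm (x : V) : R := Num.sqrt (complex.Re (ip x x)).

Definition is_hilbert : Prop :=
  [/\ (forall (a : R[i]) (x y z : V), ip (a *: x + y) z = a * ip x z + ip y z),
      (forall x y : V, ip y x = (ip x y)^*),
      (forall x : V, 0 <= ip x x),
      (forall x : V, ip x x = 0 -> x = 0) &
      (forall u : nat -> V,
         (forall e : R, 0 < e -> exists N : nat, forall m n : nat,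
              (N <= m)%N -> (N <= n)%N -> hnorm (u m - u n) < e) ->
         exists l : V, forall e : R, 0 < e -> exists N : nat, forall n : nat,
              (N <= n)%N -> hnorm (u n - l) < e)].

Definition bounded_op (T : V -> V) : Prop :=
  (forall (a : R[i]) (x y : V), T (a *: x + y) = a *: T x + T y) /\
  (exists M : R, forall x : V, hnorm (T x) <= M * hnorm x).

Definition positive_op (T : V -> V) : Prop :=
  bounded_op T /\ forall x : V, 0 <= ip (T x) x.

Definition orth_proj (P : V -> V) : Prop :=
  [/\ bounded_op P, (forall x : V, P (P x) = P x) &
      (forall x y : V, ip (P x) y = ip x (P y))].

Definition loewner_le (A B : V -> V) : Prop := positive_op (fun x => B x - A x).

Definition op_sqrt (T : V -> V) : V -> V :=
  epsilon (inhabits id) (fun S => positive_op S /\ forall x : V, S (S x) = T x).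

Definition Phi (P T : V -> V) : V -> V :=
  fun x => op_sqrt T (op_sqrt T x - P (op_sqrt T x)).

Fixpoint alt_seq (PA PB R0 : V -> V) (n : nat) : V -> V :=
  match n with
  | O => R0
  | S m => if odd m then Phi PA (alt_seq PA PB R0 m)
           else Phi PB (alt_seq PA PB R0 m)
  end.

Definition sot_conv (Rn : nat -> V -> V) (L : V -> V) : Prop :=
  forall x : V, forall e : R, 0 < e -> exists N : nat, forall n : nat,
    (N <= n)%N -> hnorm (Rn n x - L x) < e.

End Hilbert.

From mathcomp Require Import all_boot all_order all_algebra.
From mathcomp.real_closed Require Import complex.
From mathcomp Require Import reals classical_sets.
From mathcomp Require Import ring lra.
From Stdlib Require Import ClassicalEpsilon.
Import Order.TTheory Order.NatMonotonyTheory GRing.Theory Num.Theory.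

Set Implicit Arguments.
Unset Strict Implicit.
Unset Printing Implicit Defensive.

Local Open Scope ring_scope.
Local Notation "x %:C" := (x%:C)%C : ring_scope.
Local Notation re := complex.Re.
Local Notation im := complex.Im.

(* Write S_n for the square root of R_n and P_n for the projection used at step n.
   Then R_n - R_{n+1} = S_n P_n S_n, so <(R_n - R_{n+1}) x, x> = |P_n S_n x|^2:
   the R_n decrease, the scalars <R_n x, x> decrease to a limit, and
   |(R_n - R_m) x|^2 <= |R_0| <(R_n - R_m) x, x> makes (R_n x) Cauchy, so
   R_n -> R_inf strongly.  The square root of an operator 0 <= T <= I is
   I - lim Y_k with Y_0 = 0, Y_{k+1} = ((I - T) + Y_k^2) / 2; this explicit
   construction shows that square roots are unique and strongly continuous on
   bounded sets, so S_n -> S_inf := R_inf^{1/2} strongly.  As |P_n S_n x| -> 0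
   and each of P_A, P_B occurs infinitely often, P_A S_inf = P_B S_inf = 0;
   hence ran R_inf is in K and Phi_P(R_inf) = S_inf (I - P) S_inf = R_inf. *)

Lemma exists_index_near_inf (R : realType) (r : nat -> R) : (forall n, 0 <= r n) ->
  forall e : R, 0 < e -> exists N : nat, forall n, r N - r n < e.
Proof.
move=> r_ge0 e e0; pose E := [set y | exists n, y = r n]%classic.
have hE : has_inf E by split; [exists (r 0%N), 0%N | exists 0 => _ [n ->]].
have [_ [N ->] rN_lt] := inf_adherent e0 hE.
exists N => n; have : inf E <= r n by apply: ge_inf; [case: hE | exists n].
lra.
Qed.

Section ComplexParts.
Variable R : rcfType.
Implicit Types (z w : R[i]) (r : R).

Lemma complex_eq z w : re z = re w -> im z = im w -> z = w.
Proof. by case: z => a b; case: w => c d /= -> ->. Qed.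

Lemma complex_ge0 z : (0 <= z) = (im z == 0) && (0 <= re z).
Proof. by case: z => a b; rewrite lecE /= eq_sym. Qed.

Lemma reD z w : re (z + w) = re z + re w. Proof. by case: z; case: w. Qed.
Lemma imD z w : im (z + w) = im z + im w. Proof. by case: z; case: w. Qed.
Lemma reN z : re (- z) = - re z. Proof. by case: z. Qed.
Lemma imN z : im (- z) = - im z. Proof. by case: z. Qed.
Lemma reB z w : re (z - w) = re z - re w. Proof. by rewrite reD reN. Qed.
Lemma imB z w : im (z - w) = im z - im w. Proof. by rewrite imD imN. Qed.
Lemma reM z w : re (z * w) = re z * re w - im z * im w.
Proof. by case: z; case: w. Qed.
Lemma imM z w : im (z * w) = re z * im w + im z * re w.
Proof. by case: z => a b; case: w => c d /=; ring. Qed.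
Lemma reC r : re r%:C = r. Proof. by []. Qed.
Lemma imC r : im r%:C = 0. Proof. by []. Qed.
Lemma reJ z : re z^* = re z. Proof. by case: z. Qed.
Lemma imJ z : im z^* = - im z. Proof. by case: z. Qed.
Lemma reCM r z : re (r%:C * z) = r * re z.
Proof. by rewrite reM reC imC mul0r subr0. Qed.
Lemma imCM r z : im (r%:C * z) = r * im z.
Proof. by rewrite imM reC imC mul0r addr0. Qed.

Definition reimE := (reD, imD, reN, imN, reM, imM, reC, imC, reJ, imJ).

Lemma conjC_real r : r%:C^* = r%:C.
Proof. by apply: complex_eq; rewrite ?reJ ?imJ //= oppr0. Qed.

Lemma sqrtC_mul_sqrtC r : 0 <= r -> (Num.sqrt r)%:C * (Num.sqrt r)%:C = r%:C.
Proof. by move=> r0; rewrite -rmorphM -expr2 sqr_sqrtr. Qed.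

Definition sqnormc z := re z ^+ 2 + im z ^+ 2.

Lemma sqnormc_ge0 z : 0 <= sqnormc z.
Proof. rewrite /sqnormc; nra. Qed.

Lemma sqnormcC r : sqnormc r%:C = r ^+ 2.
Proof. by rewrite /sqnormc /= expr0n /= addr0. Qed.

Lemma mulcJ_sqnormc z : z * z^* = (sqnormc z)%:C.
Proof. by case: z => p q; apply: complex_eq; rewrite /sqnormc /=; ring. Qed.

End ComplexParts.

Lemma sqr_le_norm (R : realDomainType) (a b : R) : a ^+ 2 <= b ^+ 2 -> 0 <= b -> `|a| <= b.
Proof. by move=> ab b0; apply/ler_normlP; split; nra. Qed.

(* a_k bounds the norm of the k-th iterate Y_k of the square-root recursion
   whenever |I - T| <= 1 *)
Section SqrtCoef.
Context {R : archiRealFieldType}.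

Fixpoint sqrt_coef (k : nat) : R :=
  if k is k'.+1 then (1 + sqrt_coef k' ^+ 2) / 2 else 0.

Lemma sqrt_coef_ge0_le1 k : 0 <= sqrt_coef k <= 1.
Proof. by elim: k => [|k /andP[? ?]] /=; [rewrite lexx ler01 | apply/andP; split; nra]. Qed.

Lemma sqrt_coef_ge0 k : 0 <= sqrt_coef k.
Proof. by case/andP: (sqrt_coef_ge0_le1 k). Qed.

Lemma sqrt_coef_le1 k : sqrt_coef k <= 1.
Proof. by case/andP: (sqrt_coef_ge0_le1 k). Qed.

Lemma sqrt_coefS_ge k : sqrt_coef k <= sqrt_coef k.+1.
Proof. by rewrite /=; have := sqr_ge0 (1 - sqrt_coef k); nra. Qed.

Lemma sqrt_coef_le k m : (k <= m)%N -> sqrt_coef k <= sqrt_coef m.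
Proof. exact: (nondecnP sqrt_coefS_ge). Qed.

Lemma sqrt_coef_rate k : 1 - sqrt_coef k <= 2 / k.+1%:R.
Proof.
elim: k => [|k IH]; first by rewrite /= subr0 divr1 ler1n.
rewrite /=; set e := 1 - sqrt_coef k in IH *.
have e0 : 0 <= e by have := sqrt_coef_le1 k; rewrite /e; lra.
have e1 : e <= 1 by have := sqrt_coef_ge0 k; rewrite /e; lra.
have -> : 1 - (1 + sqrt_coef k ^+ 2) / 2 = e - e ^+ 2 / 2 by rewrite /e; field.
set n : R := k.+1%:R in IH *.
have n1 : 1 <= n by rewrite /n ler1n.
have -> : k.+2%:R = n + 1 by rewrite /n -natr1.
rewrite ler_pdivlMr in IH; last lra.
rewrite ler_pdivlMr; last lra.
have : 0 <= (2 - e * n) * (1 - e / 2) by apply: mulr_ge0; lra.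
nra.
Qed.

Lemma sqrt_coef_near1 e : 0 < e -> exists k, 1 - sqrt_coef k < e.
Proof.
move=> e0; have [k ek] : exists k : nat, 2 / e < k%:R.
  by exists (Num.truncn (2 / e)).+1; exact: truncnS_gt.
exists k; apply: le_lt_trans (sqrt_coef_rate k) _.
rewrite ltr_pdivrMr ?ltr0n //; rewrite ltr_pdivrMr // in ek.
have : k%:R <= k.+1%:R :> R by rewrite ler_nat.
nra.
Qed.

Lemma eq0_sqrt_coef (r c : R) : 0 <= c ->
  (forall k, `|r| <= c * (1 - sqrt_coef k)) -> r = 0.
Proof.
move=> c0 rc; apply/eqP; rewrite -normr_eq0; apply/eqP/le_anti.
rewrite normr_ge0 andbT; apply/ler_addgt0Pr => e e0.
have ec : 0 < e / (c + 1) by apply: divr_gt0; lra.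
have [k] := sqrt_coef_near1 ec; rewrite ltr_pdivlMr; last lra.
by have := rc k; have := sqrt_coef_le1 k; nra.
Qed.

End SqrtCoef.

Section SemiInnerForm.
Variables (R : rcfType) (V : lmodType R[i]).

Definition semi_inner (f : V -> V -> R[i]) :=
  [/\ forall a x y z, f (a *: x + y) z = a * f x z + f y z,
      forall x y, f y x = (f x y)^* & forall x, 0 <= f x x].

Variables (f : V -> V -> R[i]) (hf : semi_inner f).

Lemma form0l z : f 0 z = 0.
Proof.
have [flin _ _] := hf; have := flin 1 0 0 z.
by rewrite scaler0 addr0 mul1r => /(congr1 (fun t => t - f 0 z)); rewrite addrK subrr.
Qed.

Lemma formDl x y z : f (x + y) z = f x z + f y z.
Proof. by have [flin _ _] := hf; rewrite -[x]scale1r flin mul1r scale1r. Qed.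

Lemma formZl a x z : f (a *: x) z = a * f x z.
Proof. by have [flin _ _] := hf; rewrite -[a *: x]addr0 flin form0l addr0. Qed.

Lemma formNl x z : f (- x) z = - f x z.
Proof. by rewrite -scaleN1r formZl mulN1r. Qed.

Lemma formBl x y z : f (x - y) z = f x z - f y z.
Proof. by rewrite formDl formNl. Qed.

Lemma form_sym x y : f y x = (f x y)^*.
Proof. by case: hf. Qed.

Lemma formDr x y z : f z (x + y) = f z x + f z y.
Proof. by rewrite form_sym formDl rmorphD (form_sym x z) (form_sym y z). Qed.

Lemma formZr a x z : f z (a *: x) = a^* * f z x.
Proof. by rewrite form_sym formZl rmorphM (form_sym x z). Qed.

Lemma form0r z : f z 0 = 0.
Proof. by rewrite -(scale0r 0) formZr conjC0 mul0r. Qed.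

Lemma formBr x y z : f z (x - y) = f z x - f z y.
Proof. by rewrite formDr -scaleN1r formZr rmorphN1 mulN1r. Qed.

Lemma im_form_xx x : im (f x x) = 0.
Proof. by have [_ _ /(_ x)] := hf; rewrite complex_ge0 => /andP[/eqP]. Qed.

Lemma re_form_xx_ge0 x : 0 <= re (f x x).
Proof. by have [_ _ /(_ x)] := hf; rewrite complex_ge0 => /andP[]. Qed.

Lemma form_CauchySchwarz x y : sqnormc (f x y) <= re (f x x) * re (f y y).
Proof.
set c := f x y; set A := re (f x x); set B := re (f y y); set N := sqnormc c.
(* expand 0 <= f (x - t c y) (x - t c y) for real t *)
have quad t : 0 <= A - 2 * t * N + t ^+ 2 * N * B.
  have := re_form_xx_ge0 (x - (t%:C * c) *: y).
  rewrite !(formBl, formBr, formZl, formZr) -/c (form_sym x y) -/c.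
  rewrite /A /B /N /sqnormc !reimE (im_form_xx y) => /le_trans; apply.
  by rewrite le_eqVlt; apply/orP; left; apply/eqP; ring.
have N0 : 0 <= N := sqnormc_ge0 c.
have A0 : 0 <= A := re_form_xx_ge0 x.
have B0 : 0 <= B := re_form_xx_ge0 y.
have [->|Nneq0] := eqVneq N 0; first by nra.
have [B_eq0|Bneq0] := eqVneq B 0.
  have := quad ((A + 1) / (2 * N)); rewrite B_eq0 mulr0 addr0.
  have -> : 2 * ((A + 1) / (2 * N)) * N = A + 1 by field; rewrite Nneq0 /=; lra.
  lra.
have Bpos : 0 < B by rewrite lt_def Bneq0 B0.
have := quad B^-1; have -> : B^-1 ^+ 2 * N * B = B^-1 * N by field.
move=> h; have : 0 <= B * (A - 2 * B^-1 * N + B^-1 * N) by apply: mulr_ge0; lra.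
have -> : B * (A - 2 * B^-1 * N + B^-1 * N) = A * B - N by field.
lra.
Qed.

End SemiInnerForm.

Section HilbertSpace.
Variables (R : realType) (V : lmodType R[i]) (ip : V -> V -> R[i]).
Hypothesis hH : is_hilbert ip.
Local Notation nrm := (hnorm ip).
Local Notation a := (@sqrt_coef R).
Implicit Types (x y z : V) (T S : V -> V).

Lemma ip_semi_inner : semi_inner ip.
Proof. by case: hH => ? ? ? _ _; split. Qed.

Let ipDl := formDl ip_semi_inner.
Let ipZl := formZl ip_semi_inner.
Let ipBl := formBl ip_semi_inner.
Let ipDr := formDr ip_semi_inner.
Let ipZr := formZr ip_semi_inner.
Let ipBr := formBr ip_semi_inner.
Let ip0l := form0l ip_semi_inner.
Let ip0r := form0r ip_semi_inner.
Let ip_sym := form_sym ip_semi_inner.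
Let im_ip_xx := im_form_xx ip_semi_inner.

Lemma hnorm_ge0 x : 0 <= nrm x.
Proof. exact: sqrtr_ge0. Qed.

Lemma hnorm_sqr x : nrm x ^+ 2 = re (ip x x).
Proof. by rewrite /hnorm sqr_sqrtr // (re_form_xx_ge0 ip_semi_inner). Qed.

Lemma ip_xx x : ip x x = (nrm x ^+ 2)%:C.
Proof. by apply: complex_eq; rewrite ?hnorm_sqr // im_ip_xx. Qed.

Lemma ip_CauchySchwarz x y : sqnormc (ip x y) <= (nrm x * nrm y) ^+ 2.
Proof. by rewrite exprMn !hnorm_sqr; exact: (form_CauchySchwarz ip_semi_inner). Qed.

Lemma re_ip_le x y : `|re (ip x y)| <= nrm x * nrm y.
Proof.
apply: sqr_le_norm; last by rewrite mulr_ge0 ?hnorm_ge0.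
by apply: le_trans (ip_CauchySchwarz x y); rewrite /sqnormc lerDl sqr_ge0.
Qed.

Lemma im_ip_le x y : `|im (ip x y)| <= nrm x * nrm y.
Proof.
apply: sqr_le_norm; last by rewrite mulr_ge0 ?hnorm_ge0.
by apply: le_trans (ip_CauchySchwarz x y); rewrite /sqnormc lerDr sqr_ge0.
Qed.

Lemma ler_hnormD x y : nrm (x + y) <= nrm x + nrm y.
Proof.
have /ler_normlP[_ h] := re_ip_le x y.
apply: le_trans (ler_norm _) _; apply: sqr_le_norm.
  by rewrite hnorm_sqr ipDl !ipDr !reD -!hnorm_sqr (ip_sym x y) reJ; nra.
by rewrite addr_ge0 ?hnorm_ge0.
Qed.

Lemma hnormZ a x : nrm (a *: x) = Num.sqrt (sqnormc a) * nrm x.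
Proof.
by rewrite /hnorm ipZl ipZr mulrA mulcJ_sqnormc reCM sqrtrM // sqnormc_ge0.
Qed.

Lemma hnormZ_real (r : R) x : nrm (r%:C *: x) = `|r| * nrm x.
Proof. by rewrite hnormZ sqnormcC sqrtr_sqr. Qed.

Lemma hnormN x : nrm (- x) = nrm x.
Proof.
have -> : - x = (-1)%:C *: x by rewrite rmorphN1 scaleN1r.
by rewrite hnormZ_real normrN normr1 mul1r.
Qed.

Lemma hdistC x y : nrm (x - y) = nrm (y - x).
Proof. by rewrite -hnormN opprB. Qed.

Lemma ler_hdistD x y z : nrm (x - z) <= nrm (x - y) + nrm (y - z).
Proof. by have := ler_hnormD (x - y) (y - z); rewrite addrA subrK. Qed.

Lemma hnorm0 : nrm 0 = 0.
Proof. by rewrite /hnorm ip0l sqrtr0. Qed.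

Lemma hnorm_eq0 x : nrm x = 0 -> x = 0.
Proof.
have [_ _ _ ip_def _] := hH => x0; apply: ip_def.
by rewrite ip_xx x0 expr0n.
Qed.

Lemma hnorm_sqr_le0 x : nrm x ^+ 2 <= 0 -> x = 0.
Proof. by move=> h; apply: hnorm_eq0; have := hnorm_ge0 x; nra. Qed.

Lemma hnorm_ub_eq0 x : (forall e : R, 0 < e -> nrm x <= e) -> x = 0.
Proof.
move=> h; apply: hnorm_eq0; apply/le_anti; rewrite hnorm_ge0 andbT.
by apply/ler_addgt0Pr => e /h; rewrite add0r.
Qed.

Lemma hnorm_eq0_sqrt_coef x (c : R) : 0 <= c ->
  (forall k, nrm x <= c * (1 - a k)) -> x = 0.
Proof.
move=> c0 xc; apply: hnorm_eq0; apply: (eq0_sqrt_coef c0) => k.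
by rewrite ger0_norm ?hnorm_ge0.
Qed.

Definition tendsto (u : nat -> V) (l : V) :=
  forall e : R, 0 < e -> exists N : nat, forall n, (N <= n)%N -> nrm (u n - l) < e.

Lemma tendsto_unique u l l' : tendsto u l -> tendsto u l' -> l = l'.
Proof.
move=> ul ul'; apply/eqP; rewrite -subr_eq0; apply/eqP; apply: hnorm_ub_eq0 => e e0.
have e2 : 0 < e / 2 by lra.
have [N1 h1] := ul _ e2; have [N2 h2] := ul' _ e2; set n := maxn N1 N2.
have := h1 n (leq_maxl _ _); have := h2 n (leq_maxr _ _).
have := ler_hdistD l (u n) l'; rewrite (hdistC l (u n)); lra.
Qed.

Lemma tendsto_hdist_le u l w b N : tendsto u l ->
  (forall n, (N <= n)%N -> nrm (u n - w) <= b) -> nrm (l - w) <= b.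
Proof.
move=> ul hb; apply/ler_addgt0Pr => e /ul[N1 h1]; set n := maxn N N1.
have := h1 n (leq_maxr _ _); have := hb n (leq_maxl _ _).
have := ler_hdistD l (u n) w; rewrite (hdistC l (u n)); lra.
Qed.

Lemma tendsto_cst l : tendsto (fun=> l) l.
Proof. by move=> e e0; exists 0%N => n _; rewrite subrr hnorm0. Qed.

Lemma eq_tendsto u v l : (forall n, u n = v n) -> tendsto u l -> tendsto v l.
Proof. by move=> uv ul e /ul[N h]; exists N => n /h; rewrite uv. Qed.

Lemma tendsto_dominated u l v m (c : R) : 0 <= c -> tendsto u l ->
  (forall n, nrm (v n - m) <= c * nrm (u n - l)) -> tendsto v m.
Proof.
move=> c0 ul hb e e0; have ce : 0 < e / (c + 1) by apply: divr_gt0; lra.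
have [N h] := ul _ ce; exists N => n /h; rewrite ltr_pdivlMr; last lra.
by have := hnorm_ge0 (u n - l); have := hb n; nra.
Qed.

Lemma tendstoD u v l m : tendsto u l -> tendsto v m ->
  tendsto (fun n => u n + v n) (l + m).
Proof.
move=> ul vm e e0; have e2 : 0 < e / 2 by lra.
have [N1 h1] := ul _ e2; have [N2 h2] := vm _ e2; exists (maxn N1 N2) => n hn.
have := h1 n (leq_trans (leq_maxl _ _) hn); have := h2 n (leq_trans (leq_maxr _ _) hn).
have := ler_hnormD (u n - l) (v n - m); rewrite addrACA -opprD; lra.
Qed.

Lemma tendstoZ a u l : tendsto u l -> tendsto (fun n => a *: u n) (a *: l).
Proof.
move=> ul; apply: (tendsto_dominated (sqrtr_ge0 (sqnormc a)) ul) => n.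
by rewrite -scalerBr hnormZ.
Qed.

Lemma tendstoB u v l m : tendsto u l -> tendsto v m ->
  tendsto (fun n => u n - v n) (l - m).
Proof.
move=> ul /(tendstoZ (-1)); rewrite scaleN1r => /(tendstoD ul).
by apply: eq_tendsto => n; rewrite scaleN1r.
Qed.

Lemma cauchy_tendsto u : (forall e : R, 0 < e -> exists N : nat, forall m n,
   (N <= m)%N -> (N <= n)%N -> nrm (u m - u n) < e) -> exists l, tendsto u l.
Proof. by case: hH => _ _ _ _ complete /complete. Qed.

Definition linear_op T := forall a x y, T (a *: x + y) = a *: T x + T y.

Section LinearOp.
Variables (T : V -> V) (T_lin : linear_op T).

Lemma linop0 : T 0 = 0.
Proof.
have := T_lin 1 0 0; rewrite scaler0 addr0 scale1r.
by move=> /(congr1 (fun t => t - T 0)); rewrite addrK subrr.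
Qed.

Lemma linopD x y : T (x + y) = T x + T y.
Proof. by have := T_lin 1 x y; rewrite !scale1r. Qed.

Lemma linopZ a x : T (a *: x) = a *: T x.
Proof. by rewrite -[a *: x]addr0 T_lin linop0 addr0. Qed.

Lemma linopB x y : T (x - y) = T x - T y.
Proof. by rewrite linopD -scaleN1r linopZ scaleN1r. Qed.

End LinearOp.

Definition op_bound T (M : R) := 0 <= M /\ forall x, nrm (T x) <= M * nrm x.

Lemma bounded_op_linear T : bounded_op ip T -> linear_op T.
Proof. by case. Qed.

Lemma bounded_op_bound T : bounded_op ip T -> exists M, op_bound T M.
Proof.
case=> _ [M HM]; exists (Num.max M 0); split => [|x]; first by rewrite le_max lexx orbT.
by apply: le_trans (HM x) _; rewrite ler_wpM2r ?hnorm_ge0 // le_max lexx.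
Qed.

Lemma bounded_opP T M : linear_op T -> op_bound T M -> bounded_op ip T.
Proof. by move=> Tlin [_ TM]; split => //; exists M. Qed.

Lemma op_bound_le T M M' : M <= M' -> op_bound T M -> op_bound T M'.
Proof.
move=> MM' [M0 TM]; split => [|x]; first lra.
by apply: le_trans (TM x) _; rewrite ler_wpM2r ?hnorm_ge0.
Qed.

Lemma eq_linear_op T T' : T =1 T' -> linear_op T -> linear_op T'.
Proof. by move=> E Tlin a x y; rewrite -!E. Qed.

Lemma eq_op_bound T T' M : T =1 T' -> op_bound T M -> op_bound T' M.
Proof. by move=> E [M0 TM]; split => // x; rewrite -E. Qed.

Lemma eq_bounded_op T T' : T =1 T' -> bounded_op ip T -> bounded_op ip T'.
Proof.
move=> E Tb; have [M TM] := bounded_op_bound Tb.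
exact: bounded_opP (eq_linear_op E (bounded_op_linear Tb)) (eq_op_bound E TM).
Qed.

Lemma eq_positive_op T T' : T =1 T' -> positive_op ip T -> positive_op ip T'.
Proof. by move=> E [Tb Tpos]; split => [|x]; [exact: eq_bounded_op Tb | rewrite -E]. Qed.

Lemma linear_op_id : linear_op id. Proof. by []. Qed.

Lemma linear_op_comp T S : linear_op T -> linear_op S -> linear_op (T \o S).
Proof. by move=> Tlin Slin a x y /=; rewrite Slin Tlin. Qed.

Lemma linear_opB T S : linear_op T -> linear_op S -> linear_op (fun x => T x - S x).
Proof. by move=> Tlin Slin a x y; rewrite Tlin Slin scalerBr opprD addrACA. Qed.

Lemma linear_opD T S : linear_op T -> linear_op S -> linear_op (fun x => T x + S x).
Proof. by move=> Tlin Slin a x y; rewrite Tlin Slin scalerDr addrACA. Qed.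

Lemma linear_opZ a T : linear_op T -> linear_op (fun x => a *: T x).
Proof. by move=> Tlin b x y; rewrite Tlin scalerDr !scalerA mulrC. Qed.

Lemma op_bound_id : op_bound id 1.
Proof. by split => // x; rewrite mul1r. Qed.

Lemma op_bound_comp T S M N : op_bound T M -> op_bound S N -> op_bound (T \o S) (M * N).
Proof.
move=> [M0 TM] [N0 SN]; split => [|x /=]; first exact: mulr_ge0.
by apply: le_trans (TM _) _; rewrite -mulrA ler_wpM2l.
Qed.

Lemma op_boundD T S M N : op_bound T M -> op_bound S N ->
  op_bound (fun x => T x + S x) (M + N).
Proof.
move=> [M0 TM] [N0 SN]; split => [|x]; first exact: addr_ge0.
by apply: le_trans (ler_hnormD _ _) _; rewrite mulrDl lerD.
Qed.

Lemma op_boundB T S M N : op_bound T M -> op_bound S N ->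
  op_bound (fun x => T x - S x) (M + N).
Proof.
move=> [M0 TM] [N0 SN]; split => [|x]; first exact: addr_ge0.
by apply: le_trans (ler_hnormD _ _) _; rewrite mulrDl hnormN lerD.
Qed.

Lemma op_boundZ (r : R) T M : op_bound T M -> op_bound (fun x => r%:C *: T x) (`|r| * M).
Proof.
move=> [M0 TM]; split => [|x]; first by rewrite mulr_ge0.
by rewrite hnormZ_real -mulrA ler_wpM2l.
Qed.

Lemma bounded_op_comp T S : bounded_op ip T -> bounded_op ip S -> bounded_op ip (T \o S).
Proof.
move=> Tb Sb; have [M TM] := bounded_op_bound Tb; have [N SN] := bounded_op_bound Sb.
exact: bounded_opP (linear_op_comp (bounded_op_linear Tb) (bounded_op_linear Sb))
  (op_bound_comp TM SN).
Qed.

Lemma bounded_opB T S : bounded_op ip T -> bounded_op ip S ->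
  bounded_op ip (fun x => T x - S x).
Proof.
move=> Tb Sb; have [M TM] := bounded_op_bound Tb; have [N SN] := bounded_op_bound Sb.
exact: bounded_opP (linear_opB (bounded_op_linear Tb) (bounded_op_linear Sb))
  (op_boundB TM SN).
Qed.

Lemma tendsto_op T M u l : op_bound T M -> linear_op T -> tendsto u l ->
  tendsto (fun n => T (u n)) (T l).
Proof.
move=> [M0 TM] Tlin /(tendsto_dominated M0); apply => n.
by rewrite -(linopB Tlin) TM.
Qed.

Lemma loewner_le0 T : positive_op ip T -> loewner_le ip (fun=> 0) T.
Proof. by apply: eq_positive_op => x; rewrite subr0. Qed.

Definition psd T := forall x, 0 <= ip (T x) x.

Definition selfadjoint T := forall x y, ip (T x) y = ip x (T y).

Lemma psdP T : (forall x, im (ip (T x) x) = 0) -> (forall x, 0 <= re (ip (T x) x)) -> psd T.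
Proof. by move=> h1 h2 x; rewrite complex_ge0 h1 eqxx h2. Qed.

Lemma psd_im T x : psd T -> im (ip (T x) x) = 0.
Proof. by move=> /(_ x); rewrite complex_ge0 => /andP[/eqP]. Qed.

Lemma psd_re_ge0 T x : psd T -> 0 <= re (ip (T x) x).
Proof. by move=> /(_ x); rewrite complex_ge0 => /andP[]. Qed.

Lemma psdD T S : psd T -> psd S -> psd (fun x => T x + S x).
Proof.
move=> Tpos Spos; apply: psdP => x; rewrite ipDl ?imD ?reD.
  by rewrite (psd_im _ Tpos) (psd_im _ Spos) addr0.
by rewrite addr_ge0 ?psd_re_ge0.
Qed.

Lemma positive_opD T S : positive_op ip T -> positive_op ip S ->
  positive_op ip (fun x => T x + S x).
Proof.
move=> [Tb Tpos] [Sb Spos]; split; last exact: psdD.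
have [M TM] := bounded_op_bound Tb; have [N SN] := bounded_op_bound Sb.
exact: bounded_opP (linear_opD (bounded_op_linear Tb) (bounded_op_linear Sb))
  (op_boundD TM SN).
Qed.

Lemma selfadjoint_im T x : selfadjoint T -> im (ip (T x) x) = 0.
Proof.
by move=> /(_ x x); rewrite (ip_sym (T x)) => /(congr1 (@complex.Im _)); rewrite imJ; lra.
Qed.

(* polarization: the hermitian form (x, y) |-> <T x, y> is recovered from its
   (real) diagonal values at x + y and x + i y *)
Lemma psd_selfadjoint T : linear_op T -> psd T -> selfadjoint T.
Proof.
move=> Tlin Tpos x y; set a := ip (T x) y; set b := ip (T y) x.
have h1 := psd_im (x + y) Tpos.
rewrite (linopD Tlin) ipDl !ipDr !imD !(psd_im _ Tpos) add0r addr0 -/a -/b in h1.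
have h2 := psd_im (x + 'i *: y) Tpos.
rewrite (linopD Tlin) (linopZ Tlin) ipDl !ipDr !ipZl !ipZr !imD (psd_im _ Tpos) -/a -/b in h2.
rewrite !imM !reM !reJ !imJ /= (psd_im _ Tpos) in h2.
rewrite (ip_sym (T y) x) -/b; apply: complex_eq; rewrite ?reJ ?imJ; last lra.
by move: h2; set p := re (ip (T y) y); set q := im (ip (T y) y); lra.
Qed.

Lemma positive_op_selfadjoint T : positive_op ip T -> selfadjoint T.
Proof. by case=> [[Tlin _] Tpos]; exact: psd_selfadjoint. Qed.

Lemma positive_op_semi_inner T : positive_op ip T -> semi_inner (fun x y => ip (T x) y).
Proof.
move=> hT; have Tsa := positive_op_selfadjoint hT; case: hT => [[Tlin _] Tpos].
split => // [a x y z|x y]; first by rewrite Tlin ipDl ipZl.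
by rewrite Tsa ip_sym.
Qed.

Lemma re_form_le_op_bound T C z : op_bound T C -> re (ip (T z) z) <= C * nrm z ^+ 2.
Proof.
move=> [C0 TC]; have /ler_normlP[_ h] := re_ip_le (T z) z.
by apply: le_trans h _; rewrite expr2 mulrA ler_wpM2r ?hnorm_ge0.
Qed.

(* Cauchy-Schwarz for the form <T _, _> at (x, T x) *)
Lemma positive_op_sqr_le T C x : positive_op ip T -> op_bound T C ->
  nrm (T x) ^+ 2 <= C * re (ip (T x) x).
Proof.
move=> hT TC; have := form_CauchySchwarz (positive_op_semi_inner hT) x (T x).
rewrite /= ip_xx sqnormcC => CS.
have h := re_form_le_op_bound (T x) TC; have [C0 _] := TC.
have q0 : 0 <= re (ip (T x) x) by case: hT => _ /psd_re_ge0; apply.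
have n0 := hnorm_ge0 (T x).
have [->|nneq0] := eqVneq (nrm (T x)) 0; first by rewrite expr0n /= mulr_ge0.
have p2 : 0 < nrm (T x) ^+ 2 by rewrite exprn_gt0 // lt_def nneq0 n0.
have : nrm (T x) ^+ 2 ^+ 2 <= re (ip (T x) x) * (C * nrm (T x) ^+ 2).
  by apply: le_trans CS _; rewrite ler_wpM2l.
nra.
Qed.

Lemma op_bound_dominated D E C : positive_op ip D -> psd (fun x => E x - D x) ->
  op_bound E C -> op_bound D C.
Proof.
move=> hD hED hE; have [C0 _] := hE; split => // x.
have form_le z : re (ip (D z) z) <= C * nrm z ^+ 2.
  apply: le_trans (re_form_le_op_bound z hE).
  by have := psd_re_ge0 z hED; rewrite ipBl reB; lra.
have := form_CauchySchwarz (positive_op_semi_inner hD) x (D x).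
rewrite /= ip_xx sqnormcC => CS.
have h1 := form_le x; have h2 := form_le (D x).
have q0 : 0 <= re (ip (D x) x) by case: hD => _ /psd_re_ge0; apply.
have n0 := hnorm_ge0 (D x); have m0 := hnorm_ge0 x.
apply: le_trans (ler_norm _) _; apply: sqr_le_norm; last exact: mulr_ge0.
have [->|nneq0] := eqVneq (nrm (D x)) 0; first by rewrite expr0n /= sqr_ge0.
have p2 : 0 < nrm (D x) ^+ 2 by rewrite exprn_gt0 // lt_def nneq0 n0.
have : nrm (D x) ^+ 2 ^+ 2 <= C * nrm x ^+ 2 * (C * nrm (D x) ^+ 2).
  by apply: le_trans CS _; apply: ler_pM => //; case: hD => _ /psd_re_ge0; apply.
rewrite exprMn; nra.
Qed.

Lemma psd_tendsto (A : nat -> V -> V) L : (forall n, psd (A n)) ->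
  (forall x, tendsto (fun n => A n x) (L x)) -> psd L.
Proof.
move=> Apos AL; apply: psdP => x.
  apply/eqP; rewrite -normr_eq0; apply/eqP/le_anti; rewrite normr_ge0 andbT.
  apply/ler_addgt0Pr => e e0; rewrite add0r.
  have ex : 0 < e / (nrm x + 1) by apply: divr_gt0 => //; have := hnorm_ge0 x; lra.
  have [N /(_ N (leqnn N))] := AL x _ ex.
  rewrite ltr_pdivlMr; last by have := hnorm_ge0 x; lra.
  have -> : im (ip (L x) x) = - im (ip (A N x - L x) x).
    by rewrite ipBl imB (psd_im _ (Apos N)) sub0r opprK.
  rewrite normrN => h; apply: le_trans (im_ip_le _ _) _.
  by have := hnorm_ge0 x; have := hnorm_ge0 (A N x - L x); nra.
apply/ler_addgt0Pr => e e0.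
have ex : 0 < e / (nrm x + 1) by apply: divr_gt0 => //; have := hnorm_ge0 x; lra.
have [N /(_ N (leqnn N))] := AL x _ ex.
rewrite ltr_pdivlMr; last by have := hnorm_ge0 x; lra.
have -> : re (ip (L x) x) = re (ip (A N x) x) - re (ip (A N x - L x) x).
  by rewrite ipBl reB opprB addrC subrK.
have := psd_re_ge0 x (Apos N); have /ler_normlP[_ h] := re_ip_le (A N x - L x) x.
by have := hnorm_ge0 x; have := hnorm_ge0 (A N x - L x); nra.
Qed.

Section Projection.
Variables (P : V -> V) (hP : orth_proj ip P).

Lemma proj_linear : linear_op P. Proof. by case: hP => [[]]. Qed.
Lemma proj_bounded : bounded_op ip P. Proof. by case: hP. Qed.
Lemma projK x : P (P x) = P x. Proof. by case: hP. Qed.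
Lemma proj_selfadjoint : selfadjoint P. Proof. by case: hP. Qed.

Lemma proj_compl x : P (x - P x) = 0.
Proof. by rewrite (linopB proj_linear) projK subrr. Qed.

Lemma ip_proj_compl x y : ip (P x) (y - P y) = 0.
Proof. by rewrite proj_selfadjoint proj_compl ip0r. Qed.

Lemma ip_compl_proj x y : ip (x - P x) (P y) = 0.
Proof. by rewrite -proj_selfadjoint proj_compl ip0l. Qed.

Lemma ip_compl x : ip (x - P x) x = (nrm (x - P x) ^+ 2)%:C.
Proof. by rewrite -ip_xx [in RHS]ipBr ip_compl_proj subr0. Qed.

Lemma ip_proj x : ip (P x) x = (nrm (P x) ^+ 2)%:C.
Proof. by rewrite -ip_xx -{2}(subrK (P x) x) ipDr ip_proj_compl add0r. Qed.

Lemma hnorm_proj_le x : nrm (P x) <= nrm x.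
Proof.
have Pyth : nrm x ^+ 2 = nrm (P x) ^+ 2 + nrm (x - P x) ^+ 2.
  rewrite hnorm_sqr -{1 2}(subrK (P x) x) ipDl !(ipDr (x - P x) (P x)) ip_compl_proj ip_proj_compl.
  by rewrite addr0 add0r !reD -!hnorm_sqr addrC.
apply: le_trans (ler_norm _) _; apply: sqr_le_norm; last exact: hnorm_ge0.
by rewrite Pyth lerDl sqr_ge0.
Qed.

End Projection.

(** * Square roots *)

Local Notation half := (2^-1 : R)%:C.

Fixpoint iterY B (k : nat) : V -> V :=
  if k is k'.+1 then fun x => half *: (B x + iterY B k' (iterY B k' x)) else fun=> 0.

Definition limY B x := epsilon (inhabits 0) (tendsto (fun k => iterY B k x)).

Definition sqrtI B x := x - limY B x.

Definition sa_contraction B := [/\ linear_op B, selfadjoint B & op_bound B 1].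

Lemma hnorm_half x : nrm (half *: x) = nrm x / 2.
Proof. by rewrite hnormZ_real ger0_norm ?invr_ge0 ?ler0n // mulrC. Qed.

Lemma half_add_half x : half *: x + half *: x = x.
Proof.
rewrite -scalerDl -rmorphD; have -> : (2^-1 + 2^-1 : R) = 1 by field.
by rewrite rmorph1 scale1r.
Qed.

Section SquareRootIteration.
Variables (B : V -> V) (hB : sa_contraction B).
Let B_lin : linear_op B. Proof. by case: hB. Qed.
Let B_sa : selfadjoint B. Proof. by case: hB. Qed.
Let B_le1 x : nrm (B x) <= nrm x.
Proof. by case: hB => _ _ [_ /(_ x)]; rewrite mul1r. Qed.

Lemma iterY_linear k : linear_op (iterY B k).
Proof.
elim: k => [|k IH] /=; first by move=> ? ? ?; rewrite scaler0 addr0.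
exact/linear_opZ/(linear_opD B_lin)/linear_op_comp.
Qed.

Lemma iterY_selfadjoint k : selfadjoint (iterY B k).
Proof.
elim: k => [|k IH] /= x y; first by rewrite ip0l ip0r.
by rewrite ipZl ipZr conjC_real ipDl ipDr B_sa !IH.
Qed.

Lemma iterY_bound k : op_bound (iterY B k) (a k).
Proof.
split=> [|x]; first exact: sqrt_coef_ge0.
elim: k x => [|k IH] x /=; first by rewrite hnorm0 mul0r.
rewrite hnorm_half; have := ler_hnormD (B x) (iterY B k (iterY B k x)).
have YY : nrm (iterY B k (iterY B k x)) <= a k ^+ 2 * nrm x.
  by apply: le_trans (IH _) _; rewrite expr2 -mulrA ler_wpM2l ?sqrt_coef_ge0.
have := B_le1 x; have := hnorm_ge0 x; nra.
Qed.

Lemma iterY_dist k m x : (k <= m)%N ->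
  nrm (iterY B m x - iterY B k x) <= (a m - a k) * nrm x.
Proof.
elim: k m x => [|k IH] m x km.
  by rewrite /= !subr0; case: (iterY_bound m) => _ /(_ x).
case: m km => // m; rewrite ltnS => km /=.
rewrite -scalerBr hnorm_half.
have -> : B x + iterY B m (iterY B m x) - (B x + iterY B k (iterY B k x)) =
    iterY B m (iterY B m x - iterY B k x) +
    (iterY B m (iterY B k x) - iterY B k (iterY B k x)).
  by rewrite (linopB (iterY_linear m)) opprD addrACA subrr add0r addrA subrK.
have := ler_hnormD (iterY B m (iterY B m x - iterY B k x))
  (iterY B m (iterY B k x) - iterY B k (iterY B k x)).
have h1 : nrm (iterY B m (iterY B m x - iterY B k x)) <= a m * ((a m - a k) * nrm x).
  apply: le_trans (proj2 (iterY_bound m) _) _.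
  by rewrite ler_wpM2l ?sqrt_coef_ge0 ?IH.
have h2 := IH m (iterY B k x) km.
have h3 : nrm (iterY B k x) <= a k * nrm x by case: (iterY_bound k) => _ /(_ x).
have amk : 0 <= a m - a k by rewrite subr_ge0 sqrt_coef_le.
have := ler_wpM2l amk h3; have := hnorm_ge0 x; have := sqrt_coef_ge0 (R := R) k; nra.
Qed.

Lemma limY_tendsto x : tendsto (fun k => iterY B k x) (limY B x).
Proof.
apply: (epsilon_spec (inhabits 0) (tendsto _)); apply: cauchy_tendsto => e e0.
have nx := hnorm_ge0 x.
have [N] := sqrt_coef_near1 (divr_gt0 e0 (ltr_wpDl nx ltr01)).
rewrite ltr_pdivlMr ?ltr_wpDl // => hN; exists N => m n hm hn.
wlog nm : m n hm hn / (n <= m)%N => [W|].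
  by case: (leqP n m) => [|/ltnW] nm; [|rewrite hdistC]; apply: W.
apply: le_lt_trans (iterY_dist x nm) _.
have := sqrt_coef_le (R := R) hn; have := sqrt_coef_le1 (R := R) N.
by have := sqrt_coef_le1 (R := R) m; nra.
Qed.

Lemma hdist_limY_iterY k x : nrm (limY B x - iterY B k x) <= (1 - a k) * nrm x.
Proof.
apply: (tendsto_hdist_le (limY_tendsto x) (N := k)) => n kn.
apply: le_trans (iterY_dist x kn) _; rewrite ler_wpM2r ?hnorm_ge0 //.
by have := sqrt_coef_le1 (R := R) n; lra.
Qed.

Lemma limY_linear : linear_op (limY B).
Proof.
move=> c x y; apply: (tendsto_unique (limY_tendsto _)).
apply: eq_tendsto (tendstoD (tendstoZ c (limY_tendsto x)) (limY_tendsto y)) => n.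
by rewrite iterY_linear.
Qed.

Lemma limY_bound : op_bound (limY B) 1.
Proof.
split=> // x; rewrite mul1r -[limY B x]subr0.
apply: (tendsto_hdist_le (limY_tendsto x) (N := 0)) => n _.
rewrite subr0; apply: le_trans (proj2 (iterY_bound n) x) _.
by have := sqrt_coef_le1 (R := R) n; have := hnorm_ge0 x; nra.
Qed.

Lemma limY_selfadjoint : selfadjoint (limY B).
Proof.
move=> x y; apply/eqP; rewrite -subr_eq0; apply/eqP.
have split_at k : ip (limY B x) y - ip x (limY B y) =
    ip (limY B x - iterY B k x) y - ip x (limY B y - iterY B k y).
  by rewrite ipBl ipBr iterY_selfadjoint opprB addrA subrK.
have nx := hnorm_ge0 x; have ny := hnorm_ge0 y.
have b1 k : nrm (limY B x - iterY B k x) * nrm y <= (1 - a k) * (nrm x * nrm y).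
  by rewrite mulrA ler_wpM2r ?hdist_limY_iterY.
have b2 k : nrm x * nrm (limY B y - iterY B k y) <= (1 - a k) * (nrm x * nrm y).
  by rewrite mulrCA ler_wpM2l ?hdist_limY_iterY.
have c0 : 0 <= 2 * (nrm x * nrm y) by rewrite mulr_ge0 ?mulr_ge0.
apply: complex_eq; apply: (eq0_sqrt_coef c0) => k; rewrite (split_at k) ?reB ?imB;
  apply: le_trans (ler_normB _ _) _; have := b1 k; have := b2 k.
- by have := re_ip_le (limY B x - iterY B k x) y; have := re_ip_le x (limY B y - iterY B k y); lra.
- by have := im_ip_le (limY B x - iterY B k x) y; have := im_ip_le x (limY B y - iterY B k y); lra.
Qed.

Lemma limY_sqr x : limY B (limY B x) = limY B x + limY B x - B x.
Proof.
apply/eqP; rewrite -subr_eq0; apply/eqP.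
have nx := hnorm_ge0 x.
apply: (@hnorm_eq0_sqrt_coef _ (4 * nrm x)) => [|k]; first lra.
set p := limY B (limY B x); set s := limY B x; set q := iterY B k s.
set r := iterY B k (iterY B k x); set w := iterY B k.+1 x; set t := s + s - B x.
have ww : w + w = B x + r by rewrite /w /= half_add_half.
have e0 : 0 <= 1 - a k by have := sqrt_coef_le1 (R := R) k; lra.
have ns : nrm s <= nrm x by have := proj2 limY_bound x; rewrite mul1r.
have pq : nrm (p - q) <= (1 - a k) * nrm x.
  by apply: le_trans (hdist_limY_iterY k s) _; rewrite ler_wpM2l.
have qr : nrm (q - r) <= (1 - a k) * nrm x.
  rewrite /q /r -(linopB (iterY_linear k)).
  apply: le_trans (proj2 (iterY_bound k) _) _.
  have := hdist_limY_iterY k x; rewrite -/s => h.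
  by have := sqrt_coef_le1 (R := R) k; have := sqrt_coef_ge0 (R := R) k;
    have := hnorm_ge0 (s - iterY B k x); nra.
have rt : nrm (r - t) <= 2 * ((1 - a k) * nrm x).
  have -> : r - t = (w - s) + (w - s).
    by rewrite addrACA -opprD ww /t opprB addrA [r + _]addrC.
  apply: le_trans (ler_hnormD _ _) _; rewrite hdistC.
  have := hdist_limY_iterY k.+1 x; rewrite -/s -/w => h.
  by have := sqrt_coefS_ge (R := R) k; nra.
by have := ler_hdistD p q t; have := ler_hdistD q r t; lra.
Qed.

Lemma sqrtI_linear : linear_op (sqrtI B).
Proof. exact: linear_opB linear_op_id limY_linear. Qed.

Lemma sqrtI_bound : op_bound (sqrtI B) 2.
Proof. exact: op_boundB op_bound_id limY_bound. Qed.

Lemma sqrtI_sqr x : sqrtI B (sqrtI B x) = x - B x.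
Proof.
rewrite /sqrtI (linopB limY_linear) limY_sqr.
by move: (limY B x) => y; rewrite opprB (addrAC y y) addrK addrA subrK.
Qed.

Lemma sqrtI_selfadjoint : selfadjoint (sqrtI B).
Proof. by move=> x y; rewrite /sqrtI ipBl ipBr limY_selfadjoint. Qed.

Lemma sqrtI_positive : positive_op ip (sqrtI B).
Proof.
split; first exact: bounded_opP sqrtI_linear sqrtI_bound.
apply: psdP => x; rewrite /sqrtI ipBl.
  by rewrite imB im_ip_xx (selfadjoint_im _ limY_selfadjoint) subr0.
rewrite reB -hnorm_sqr; have /ler_normlP[_ h] := re_ip_le (limY B x) x.
have := proj2 limY_bound x; rewrite mul1r.
by have := hnorm_ge0 x; have := hnorm_ge0 (limY B x); nra.
Qed.

End SquareRootIteration.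

Definition compl_op T x := x - T x.

Lemma compl_sa_contraction T : positive_op ip T -> op_bound T 1 ->
  sa_contraction (compl_op T).
Proof.
move=> hT T_le1; have T_lin : linear_op T by case: hT => [[]].
have Tsa := positive_op_selfadjoint hT.
have IT_lin : linear_op (compl_op T) by exact: linear_opB.
split => //; first by move=> x y; rewrite /compl_op ipBl ipBr Tsa.
apply: (@op_bound_dominated _ id) op_bound_id.
  split; first exact: bounded_opP IT_lin (op_boundB op_bound_id T_le1).
  apply: psdP => x; rewrite /compl_op ipBl.
    by rewrite imB im_ip_xx (psd_im _ (proj2 hT)) subr0.
  rewrite reB -hnorm_sqr; have /ler_normlP[_ h] := re_ip_le (T x) x.
  have := proj2 T_le1 x; rewrite mul1r.
  by have := hnorm_ge0 x; have := hnorm_ge0 (T x); nra.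
by move=> x /=; rewrite /compl_op subKr; exact: (proj2 hT).
Qed.

(* sqrtI (compl_op T) commutes with every S satisfying S^2 = T; then
   S + sqrt T vanishes on ran (S - sqrt T), which forces S = sqrt T *)
Section SquareRootUnique.
Variables (T S : V -> V).
Hypotheses (hT : positive_op ip T) (T_le1 : op_bound T 1) (hS : positive_op ip S)
  (SS : forall x, S (S x) = T x).
Let hB := compl_sa_contraction hT T_le1.
Let S_lin : linear_op S. Proof. by case: hS => [[]]. Qed.

Lemma commute_compl x : S (compl_op T x) = compl_op T (S x).
Proof. by rewrite /compl_op (linopB S_lin) -SS SS. Qed.

Lemma commute_iterY k x : S (iterY (compl_op T) k x) = iterY (compl_op T) k (S x).
Proof.
elim: k x => [|k IH] x /=; first exact: linop0 S_lin.
by rewrite (linopZ S_lin) (linopD S_lin) commute_compl !IH.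
Qed.

Lemma commute_sqrtI x : S (sqrtI (compl_op T) x) = sqrtI (compl_op T) (S x).
Proof.
have [M SM] := bounded_op_bound (proj1 hS).
rewrite /sqrtI (linopB S_lin); congr (_ - _).
apply: tendsto_unique (tendsto_op SM S_lin (limY_tendsto hB x)) _.
by apply: eq_tendsto (limY_tendsto hB (S x)) => n; rewrite commute_iterY.
Qed.

Lemma sqrt_unique_contraction x : S x = sqrtI (compl_op T) x.
Proof.
set Q := sqrtI (compl_op T).
have Q_lin : linear_op Q := sqrtI_linear hB.
have hQ : positive_op ip Q := sqrtI_positive hB.
have sum0 z : S (S z - Q z) + Q (S z - Q z) = 0.
  rewrite (linopB S_lin) (linopB Q_lin) commute_sqrtI SS /Q sqrtI_sqr // /compl_op subKr.
  by rewrite addrA subrK subrr.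
have both0 z : S (S z - Q z) = 0 /\ Q (S z - Q z) = 0.
  set w := S z - Q z.
  have Sw := psd_re_ge0 w (proj2 hS); have Qw := psd_re_ge0 w (proj2 hQ).
  have : re (ip (S w) w) + re (ip (Q w) w) = 0 by rewrite -reD -ipDl sum0 ip0l.
  move=> h; have Sw0 : re (ip (S w) w) = 0 by lra.
  have Qw0 : re (ip (Q w) w) = 0 by lra.
  have [M SM] := bounded_op_bound (proj1 hS).
  have := positive_op_sqr_le w hS SM; have := positive_op_sqr_le w hQ (sqrtI_bound hB).
  by rewrite Sw0 Qw0 !mulr0 => h1 h2; split; apply: hnorm_sqr_le0.
apply/eqP; rewrite -subr_eq0; apply/eqP; apply: hnorm_sqr_le0.
rewrite hnorm_sqr (_ : ip _ _ = ip (S (S x - Q x) - Q (S x - Q x)) x).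
  by have [-> ->] := both0 x; rewrite subr0 ip0l.
by rewrite [RHS]ipBl (positive_op_selfadjoint hS) (sqrtI_selfadjoint hB) -ipBr.
Qed.

End SquareRootUnique.

Section SquareRootContinuity.
Variables (Tn : nat -> V -> V) (T : V -> V).
Hypotheses (hTn : forall n, positive_op ip (Tn n) /\ op_bound (Tn n) 1)
  (hT : positive_op ip T /\ op_bound T 1)
  (TnT : forall x, tendsto (fun n => Tn n x) (T x)).
Let hBn n := compl_sa_contraction (proj1 (hTn n)) (proj2 (hTn n)).
Let hB := compl_sa_contraction (proj1 hT) (proj2 hT).

Lemma tendsto_iterY k x :
  tendsto (fun n => iterY (compl_op (Tn n)) k x) (iterY (compl_op T) k x).
Proof.
elim: k x => [|k IH] x /=; first exact: tendsto_cst.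
apply/tendstoZ/tendstoD; first exact: tendstoB (tendsto_cst x) (TnT x).
set Yn := fun n => iterY (compl_op (Tn n)) k; set Y := iterY (compl_op T) k.
have inner : tendsto (fun n => Yn n (Yn n x - Y x)) 0.
  apply: (tendsto_dominated ler01 (IH x)) => n; rewrite subr0.
  apply: le_trans (proj2 (iterY_bound (hBn n) k) _) _.
  by rewrite ler_wpM2r ?hnorm_ge0 ?sqrt_coef_le1.
have := tendstoD inner (IH (Y x)); rewrite add0r.
by apply: eq_tendsto => n; rewrite /Yn (linopB (iterY_linear (hBn n) k)) subrK.
Qed.

(* each iterate is continuous in the operator, and converges at the uniform rate
   1 - a_k *)
Lemma tendsto_sqrtI x :
  tendsto (fun n => sqrtI (compl_op (Tn n)) x) (sqrtI (compl_op T) x).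
Proof.
move=> e e0; have nx := hnorm_ge0 x; have e3 : 0 < e / 3 by lra.
have [k] := sqrt_coef_near1 (divr_gt0 e3 (ltr_wpDl nx ltr01)).
rewrite ltr_pdivlMr ?ltr_wpDl // => ak.
have small : (1 - a k) * nrm x < e / 3.
  by have := sqrt_coef_le1 (R := R) k; nra.
have [N near] := tendsto_iterY k x e3; exists N => n /near.
have := hdist_limY_iterY hB k x; have := hdist_limY_iterY (hBn n) k x.
rewrite /sqrtI; set L := limY (compl_op T) x; set Ln := limY (compl_op (Tn n)) x.
set Y := iterY (compl_op T) k x; set Yn := iterY (compl_op (Tn n)) k x.
have -> : x - Ln - (x - L) = L - Ln by rewrite opprB [LHS]addrC addrA subrK.
have := ler_hdistD L Y Ln; have := ler_hdistD Y Yn Ln.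
by rewrite (hdistC Yn Ln) (hdistC Y Yn); lra.
Qed.

End SquareRootContinuity.

Definition scale_op (c : R) T y := (c^-1)%:C *: T y.

Definition sqrt_op (c : R) T x := (Num.sqrt c)%:C *: sqrtI (compl_op (scale_op c T)) x.

Lemma scale_op_positive T (c : R) : positive_op ip T -> 0 < c -> op_bound T c ->
  positive_op ip (scale_op c T) /\ op_bound (scale_op c T) 1.
Proof.
move=> hT c0 Tc; have T_lin : linear_op T by case: hT => [[]].
have sT_le1 : op_bound (scale_op c T) 1.
  by have := op_boundZ (c^-1) Tc; rewrite ger0_norm ?invr_ge0 ?ltW // mulVf ?gt_eqF.
split => //; split; first exact: bounded_opP (linear_opZ _ T_lin) sT_le1.
apply: psdP => x; rewrite /scale_op ipZl ?imCM ?reCM.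
  by rewrite (psd_im _ (proj2 hT)) mulr0.
by apply: mulr_ge0; [rewrite invr_ge0 ltW | exact: psd_re_ge0 (proj2 hT)].
Qed.

Lemma sqrt_opP T (c : R) : positive_op ip T -> 0 < c -> op_bound T c ->
  positive_op ip (sqrt_op c T) /\ forall x, sqrt_op c T (sqrt_op c T x) = T x.
Proof.
move=> hT c0 Tc; have [hsT sT_le1] := scale_op_positive hT c0 Tc.
have hB := compl_sa_contraction hsT sT_le1.
have Q_lin := sqrtI_linear hB; have [_ Qpos] := sqrtI_positive hB.
split.
  split; first exact: bounded_opP (linear_opZ _ Q_lin) (op_boundZ _ (sqrtI_bound hB)).
  apply: psdP => x; rewrite /sqrt_op ipZl ?imCM ?reCM; first by rewrite (psd_im _ Qpos) mulr0.
  by apply: mulr_ge0; [exact: sqrtr_ge0 | exact: psd_re_ge0 Qpos].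
move=> x; rewrite /sqrt_op (linopZ Q_lin) scalerA sqrtC_mul_sqrtC ?ltW //.
rewrite sqrtI_sqr // /compl_op subKr /scale_op scalerA -rmorphM mulfV ?gt_eqF //.
by rewrite rmorph1 scale1r.
Qed.

Lemma op_sqrtP T : positive_op ip T ->
  positive_op ip (op_sqrt ip T) /\ forall x, op_sqrt ip T (op_sqrt ip T x) = T x.
Proof.
move=> hT; have [M TM] := bounded_op_bound (proj1 hT).
have M1 : 0 < M + 1 by case: TM; lra.
have TM1 : op_bound T (M + 1) by apply: op_bound_le TM; lra.
exact: (epsilon_spec (inhabits id) (fun S => positive_op ip S /\ forall x, S (S x) = T x)
  (ex_intro _ _ (sqrt_opP hT M1 TM1))).
Qed.

Lemma positive_sqrt_eq T (c : R) S : positive_op ip T -> 0 < c -> op_bound T c ->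
  positive_op ip S -> (forall x, S (S x) = T x) -> S =1 sqrt_op c T.
Proof.
move=> hT c0 Tc hS SS x; have [hsT sT_le1] := scale_op_positive hT c0 Tc.
have S_lin : linear_op S by case: hS => [[]].
have sc0 : 0 < Num.sqrt c by rewrite sqrtr_gt0.
set S' := fun y => ((Num.sqrt c)^-1)%:C *: S y.
have hS' : positive_op ip S'.
  split.
    have [M SM] := bounded_op_bound (proj1 hS).
    exact: bounded_opP (linear_opZ _ S_lin) (op_boundZ _ SM).
  apply: psdP => y; rewrite /S' ipZl ?imCM ?reCM; first by rewrite (psd_im _ (proj2 hS)) mulr0.
  by apply: mulr_ge0; [rewrite invr_ge0 ltW | exact: psd_re_ge0 (proj2 hS)].
have S'S' y : S' (S' y) = scale_op c T y.
  by rewrite /S' (linopZ S_lin) scalerA SS -rmorphM -invfM -expr2 sqr_sqrtr // ltW.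
rewrite /sqrt_op -(sqrt_unique_contraction hsT sT_le1 hS' S'S') /S' scalerA.
by rewrite -rmorphM mulfV ?gt_eqF // rmorph1 scale1r.
Qed.

Lemma tendsto_op_sqrt (Tn : nat -> V -> V) T (c : R) : 0 < c ->
  (forall n, positive_op ip (Tn n) /\ op_bound (Tn n) c) ->
  positive_op ip T -> op_bound T c ->
  (forall x, tendsto (fun n => Tn n x) (T x)) ->
  forall x, tendsto (fun n => op_sqrt ip (Tn n) x) (op_sqrt ip T x).
Proof.
move=> c0 hTn hT Tc TnT x.
have sqrtE S : positive_op ip S -> op_bound S c -> op_sqrt ip S =1 sqrt_op c S.
  move=> hS Sc y; have [hS' SS] := op_sqrtP hS.
  exact: (positive_sqrt_eq hS c0 Sc hS' SS).
rewrite sqrtE //; apply: (eq_tendsto (u := fun n => sqrt_op c (Tn n) x)) => [n|].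
  by case: (hTn n) => hn nc; rewrite sqrtE.
apply: tendstoZ; apply: tendsto_sqrtI => [n||y].
- by case: (hTn n) => hn nc; apply: scale_op_positive.
- exact: scale_op_positive.
- exact/tendstoZ/TnT.
Qed.

(** * Iterated weighted residuals *)

Section WeightedResidual.
Variables (T P : V -> V) (hT : positive_op ip T) (hP : orth_proj ip P).
Let S := op_sqrt ip T.
Let hS : positive_op ip S := proj1 (op_sqrtP hT).
Let SS : forall x, S (S x) = T x := proj2 (op_sqrtP hT).
Let S_lin : linear_op S. Proof. by case: hS => [[]]. Qed.
Let S_sa : selfadjoint S := positive_op_selfadjoint hS.

Lemma Phi_positive : positive_op ip (Phi ip P T).
Proof.
have Sb := proj1 hS; split.
  have -> : Phi ip P T = S \o (fun x => S x - (P \o S) x) by [].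
  exact/bounded_op_comp/bounded_opB/bounded_op_comp/Sb/(proj_bounded hP).
by move=> x; rewrite /Phi -/S S_sa ip_compl // ler0c sqr_ge0.
Qed.

Lemma sub_Phi x : T x - Phi ip P T x = S (P (S x)).
Proof. by rewrite /Phi -/S -SS -(linopB S_lin) subKr. Qed.

Lemma ip_sub_Phi x : ip (T x - Phi ip P T x) x = (nrm (P (S x)) ^+ 2)%:C.
Proof. by rewrite sub_Phi S_sa ip_proj. Qed.

Lemma Phi_le : positive_op ip (fun x => T x - Phi ip P T x).
Proof.
split; first exact: bounded_opB (proj1 hT) (proj1 Phi_positive).
by move=> x; rewrite ip_sub_Phi ler0c sqr_ge0.
Qed.

Hypothesis PS0 : forall x, P (S x) = 0.

Lemma Phi_eq x : Phi ip P T x = T x.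
Proof. by rewrite /Phi -/S PS0 subr0 SS. Qed.

Lemma proj_ran_eq0 x : P (T x) = 0.
Proof. by rewrite -SS PS0. Qed.

End WeightedResidual.

Section ResidualSequence.
Variables (Ps : nat -> V -> V) (R0 : V -> V).
Hypotheses (hPs : forall n, orth_proj ip (Ps n)) (hR0 : positive_op ip R0).

Fixpoint residual_seq n := if n is m.+1 then Phi ip (Ps m) (residual_seq m) else R0.
Local Notation Rn := residual_seq.

Definition residual_lim x := epsilon (inhabits 0) (tendsto (fun n => Rn n x)).

Lemma residual_seq_positive n : positive_op ip (Rn n).
Proof. by elim: n => //= n IH; exact: Phi_positive. Qed.

Lemma residual_seq_step n : positive_op ip (fun x => Rn n x - Rn n.+1 x).
Proof. exact: Phi_le (residual_seq_positive n) (hPs n). Qed.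

Lemma residual_seq_le n m : (n <= m)%N -> positive_op ip (fun x => Rn n x - Rn m x).
Proof.
move=> /subnKC <-; elim: (m - n)%N => [|d IH].
  rewrite addn0; split=> [|x]; last by rewrite subrr ip0l.
  apply: (bounded_opP (M := 0)) => [c x y|]; first by rewrite !subrr scaler0 addr0.
  by split=> // x; rewrite subrr hnorm0 mul0r.
rewrite addnS; apply: eq_positive_op (positive_opD IH (residual_seq_step (n + d))) => x.
by rewrite addrA subrK.
Qed.

Section BoundedStart.
Variables (C : R) (R0C : op_bound R0 C).
Local Notation q n x := (re (ip (Rn n x) x)).

Lemma residual_seq_bound n : op_bound (Rn n) C.
Proof.
exact: op_bound_dominated (residual_seq_positive n) (proj2 (residual_seq_le (leq0n n))) R0C.
Qed.

Lemma residual_seq_sub_bound n m : (n <= m)%N -> op_bound (fun x => Rn n x - Rn m x) C.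
Proof.
move=> nm; apply: op_bound_dominated (residual_seq_le nm) _ R0C => x.
rewrite (_ : R0 x - _ = (R0 x - Rn n x) + Rn m x); last by rewrite opprB addrA addrAC.
exact: psdD (proj2 (residual_seq_le (leq0n n))) (proj2 (residual_seq_positive m)) x.
Qed.

Lemma form_residual_nonincreasing x n : q n.+1 x <= q n x.
Proof. by have := psd_re_ge0 x (proj2 (residual_seq_step n)); rewrite ipBl reB; lra. Qed.

Lemma form_residual_ge0 x n : 0 <= q n x.
Proof. exact: psd_re_ge0 (proj2 (residual_seq_positive n)). Qed.

Lemma hdist_residual_sqr n m x : (n <= m)%N ->
  nrm (Rn n x - Rn m x) ^+ 2 <= C * (q n x - q m x).
Proof.
move=> nm; have := positive_op_sqr_le x (residual_seq_le nm) (residual_seq_sub_bound nm).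
by rewrite ipBl reB.
Qed.

Lemma residual_lim_tendsto : sot_conv ip Rn residual_lim.
Proof.
move=> x; apply: (epsilon_spec (inhabits 0) (tendsto _)); apply: cauchy_tendsto => e e0.
have [C0 _] := R0C; have d0 : 0 < e ^+ 2 / (C + 1) by rewrite divr_gt0 ?exprn_gt0 //; lra.
have [N qN] := exists_index_near_inf (form_residual_ge0 x) d0.
exists N => m n hm hn; wlog nm : m n hm hn / (n <= m)%N => [W|].
  by case: (leqP n m) => [|/ltnW] nm; [|rewrite hdistC]; apply: W.
rewrite hdistC; have := hdist_residual_sqr x nm.
have := nonincnP (form_residual_nonincreasing x) _ _ nm.
have := nonincnP (form_residual_nonincreasing x) _ _ hn.
have := qN m; rewrite ltr_pdivlMr; last lra.
by have := hnorm_ge0 (Rn n x - Rn m x); nra.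
Qed.

Lemma residual_lim_unique L : sot_conv ip Rn L -> L =1 residual_lim.
Proof. by move=> L_lim x; apply: tendsto_unique (L_lim x) (residual_lim_tendsto x). Qed.

Lemma residual_lim_linear : linear_op residual_lim.
Proof.
move=> c x y; apply: tendsto_unique (residual_lim_tendsto (c *: x + y)) _.
apply: eq_tendsto (tendstoD (tendstoZ c (residual_lim_tendsto x)) (residual_lim_tendsto y)).
by move=> n /=; rewrite (bounded_op_linear (proj1 (residual_seq_positive n))).
Qed.

Lemma residual_lim_bound : op_bound residual_lim C.
Proof.
have [C0 _] := R0C; split=> // x; rewrite -[residual_lim x]subr0.
apply: (tendsto_hdist_le (residual_lim_tendsto x) (N := 0)) => n _.
by rewrite subr0; case: (residual_seq_bound n) => _; apply.
Qed.

Lemma residual_lim_positive : positive_op ip residual_lim.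
Proof.
split; first exact: bounded_opP residual_lim_linear residual_lim_bound.
by apply: psd_tendsto residual_lim_tendsto => n; case: (residual_seq_positive n).
Qed.

Lemma residual_lim_le : loewner_le ip residual_lim R0.
Proof.
split; first exact: bounded_opB (proj1 hR0) (proj1 residual_lim_positive).
apply: (psd_tendsto (A := fun n x => R0 x - Rn n x)).
  by move=> n; case: (residual_seq_le (leq0n n)).
by move=> x; apply: tendstoB (tendsto_cst _) (residual_lim_tendsto x).
Qed.

Lemma tendsto_sqrt_residual x :
  tendsto (fun n => op_sqrt ip (Rn n) x) (op_sqrt ip residual_lim x).
Proof.
have [C0 _] := R0C; have C1 : 0 < C + 1 by lra.
have bound1 A : op_bound A C -> op_bound A (C + 1) by apply: op_bound_le; lra.
apply: tendsto_op_sqrt C1 _ residual_lim_positive _ residual_lim_tendsto x.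
  by move=> n; split; [exact: residual_seq_positive | exact/bound1/residual_seq_bound].
exact/bound1/residual_lim_bound.
Qed.

(* |P_n S_n x|^2 = q_n x - q_{n+1} x tends to 0 while S_n x tends to S_inf x *)
Lemma proj_sqrt_residual_lim P : orth_proj ip P ->
  (forall N, exists2 n, (N <= n)%N & Ps n = P) ->
  forall x, P (op_sqrt ip residual_lim x) = 0.
Proof.
move=> hP Pfreq x; apply: hnorm_ub_eq0 => e e0; have e2 : 0 < e / 2 by lra.
have [N1 qN1] := exists_index_near_inf (form_residual_ge0 x) (exprn_gt0 2 e2).
have [N2 SnS] := @tendsto_sqrt_residual x _ e2.
have [n Nn <-] := Pfreq (N1 + N2)%N.
have n1 : (N1 <= n)%N by apply: leq_trans Nn; rewrite leq_addr.
have n2 : (N2 <= n)%N by apply: leq_trans Nn; rewrite leq_addl.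
set Sinf := op_sqrt ip residual_lim x; set Sn := op_sqrt ip (Rn n) x.
have PSn : nrm (Ps n Sn) ^+ 2 = q n x - q n.+1 x.
  have := ip_sub_Phi (residual_seq_positive n) (hPs n) x.
  by move=> /(congr1 (@complex.Re _)); rewrite reC ipBl reB => ->.
have PSn_le : nrm (Ps n Sn) <= e / 2.
  apply: le_trans (ler_norm _) _; apply: sqr_le_norm; last lra.
  have := qN1 n.+1; have := nonincnP (form_residual_nonincreasing x) _ _ n1.
  by rewrite PSn; lra.
have PSinf : nrm (Ps n Sinf - Ps n Sn) <= nrm (Sn - Sinf).
  by rewrite -(linopB (proj_linear (hPs n))) hdistC hnorm_proj_le.
have := SnS n n2; have := ler_hdistD (Ps n Sinf) (Ps n Sn) 0; rewrite !subr0; lra.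
Qed.

End BoundedStart.

End ResidualSequence.

End HilbertSpace.

Theorem theorem2p1 (R : realType) (V : lmodType R[i]) (ip : V -> V -> R[i])
  (hH : is_hilbert ip) (PA PB R0 : V -> V)
  (hPA : orth_proj ip PA) (hPB : orth_proj ip PB) (hR0 : positive_op ip R0) :
  let Rn := alt_seq ip PA PB R0 in
  (forall n : nat,
     [/\ loewner_le ip (fun _ => 0) (Rn n.+1),
         loewner_le ip (Rn n.+1) (Rn n) &
         loewner_le ip (Rn n) R0]) /\
  exists Rinf : V -> V,
    [/\ positive_op ip Rinf /\ sot_conv ip Rn Rinf,
        (forall L : V -> V, positive_op ip L -> sot_conv ip Rn L ->
           forall x : V, L x = Rinf x),
        loewner_le ip (fun _ => 0) Rinf /\ loewner_le ip Rinf R0,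
        (forall x : V, PA (Rinf x) = 0 /\ PB (Rinf x) = 0) &
        (forall x : V, Rinf x = Phi ip PA Rinf x /\ Rinf x = Phi ip PB Rinf x)].
Proof.
pose Ps n := if odd n then PA else PB.
have hPs n : orth_proj ip (Ps n) by rewrite /Ps; case: odd.
have -> : alt_seq ip PA PB R0 = residual_seq ip Ps R0.
  by apply: boolp.funext; elim=> //= n ->; rewrite /Ps; case: odd.
split=> [n|].
  split.
  - exact/loewner_le0/(residual_seq_positive hH hPs hR0).
  - exact: (residual_seq_step hH hPs hR0 n).
  - exact: (residual_seq_le hH hPs hR0 (leq0n n)).
have [C R0C] := bounded_op_bound (proj1 hR0).
set Rinf := residual_lim ip Ps R0.
have hRinf : positive_op ip Rinf := residual_lim_positive hH hPs hR0 R0C.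
have SA0 : forall x, PA (op_sqrt ip Rinf x) = 0.
  apply: (proj_sqrt_residual_lim hH hPs hR0 R0C hPA) => N.
  by exists N.*2.+1; [rewrite -addnn leqW ?leq_addr | rewrite /Ps /= odd_double].
have SB0 : forall x, PB (op_sqrt ip Rinf x) = 0.
  apply: (proj_sqrt_residual_lim hH hPs hR0 R0C hPB) => N.
  by exists N.*2; [rewrite -addnn leq_addr | rewrite /Ps odd_double].
exists Rinf; split=> [||||x].
- by split; last exact: (residual_lim_tendsto hH hPs hR0 R0C).
- by move=> L _; exact: (residual_lim_unique hH hPs hR0 R0C).
- by split; [exact: loewner_le0 | exact: (residual_lim_le hH hPs hR0 R0C)].
- by move=> x; rewrite (proj_ran_eq0 hH hRinf SA0) (proj_ran_eq0 hH hRinf SB0).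
- by rewrite (Phi_eq hH hRinf SA0) (Phi_eq hH hRinf SB0).
Qed.
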